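(* For any $w, w' \in \mathcal{C}\langle A \rangle$ and $\bullet \in \{\ast, \mathrm{sh}\}$, \[ \iota(w \bullet_{\hbar} w')=\iota(w) \bullet \iota(w'), \] where $\bullet_\hbar$ denotes $\ast_\hbar$ if $\bullet=\ast$ and $\mathrm{sh}_\hbar$ if $\bullet=\mathrm{sh}$.
   Context: Let $\mathcal{C}=\mathbb{Q}[\hbar]$ ($\hbar$ formal), $\mathfrak{H}=\mathcal{C}\langle a,b\rangle$ the non-commutative polynomial ring. For $k\ge1$, $g_k=ba^k$. $A=\{\hbar b\}\cup\{ba^k\mid k\ge1\}$ (an algebraically independent set), $\mathcal{C}\langle A\rangle$ the $\mathcal{C}$-subalgebra generated by $1$ and $A$, $\mathfrak z$ the $\mathcal C$-span of $A$. Harmonic product: $\circ_\hbar$ symmetric $\mathcal C$-bilinear on $\mathfrak z$ with $(\hbar b)\circ_\hbar(\hbar b)=\hbar\cdot\hbar b$, $(\hbar b)\circ_\hbar g_k=\hbar g_k$, $g_k\circ_\hbar g_l=g_{k+l}$; $\ast_\hbar$ on $\mathcal{C}\langle A\rangle$: $w\ast_\hbar1=1\ast_\hbar w=w$, $(wu)\ast_\hbar(w'v)=(w\ast_\hbar w'v)u+(wu\ast_\hbar w')v+(w\ast_\hbar w')(u\circ_\hbar v)$ ($u,v\in A$). Shuffle product $\mathrm{sh}_\hbar$ on $\mathfrak H$: $\mathcal C$-bilinear with $w\,\mathrm{sh}_\hbar\,1=1\,\mathrm{sh}_\hbar\,w=w$, $wa\,\mathrm{sh}_\hbar\,w'a=(wa\,\mathrm{sh}_\hbar\,w'+w\,\mathrm{sh}_\hbar\,w'a+\hbar(w\,\mathrm{sh}_\hbar\,w'))a$,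 $wb\,\mathrm{sh}_\hbar\,w'=w\,\mathrm{sh}_\hbar\,w'b=(w\,\mathrm{sh}_\hbar\,w')b$; $\mathcal C\langle A\rangle$ is closed under it. Classical side: $\mathfrak h=\mathbb{Q}\langle x,y\rangle$, $z_k=yx^{k-1}$, $\mathfrak h^1=\mathbb Q+y\mathfrak h$ (the free algebra on $z_1,z_2,\dots$). Harmonic product $\ast$ on $\mathfrak h^1$: $w\ast1=1\ast w=w$, $(wz_k)\ast(w'z_l)=(w\ast w'z_l)z_k+(wz_k\ast w')z_l+(w\ast w')z_{k+l}$; shuffle product $\mathrm{sh}$ on $\mathfrak h$: $w\,\mathrm{sh}\,1=1\,\mathrm{sh}\,w=w$, $(wu)\,\mathrm{sh}\,(w'v)=(w\,\mathrm{sh}\,w'v)u+(wu\,\mathrm{sh}\,w')v$ ($u,v\in\{x,y\}$). $\iota:\mathcal C\langle A\rangle\to\mathfrak h^1$ is the unital $\mathbb Q$-algebra homomorphism (for concatenation) with $\iota(\hbar)=0$, $\iota(\hbar b)=0$ and $\iota(g_k)=z_k$ for $k\ge1$. *)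

(* with multinomials' monalg: {malg R[{fmonom L}]} is the
   free (non-commutative) R-algebra on the letters L (words = fmonom L). *)
From HB Require Import structures.
From mathcomp Require Import all_boot all_order all_algebra.
From mathcomp Require Import finmap.
From mathcomp.multinomials Require Import monalg.

Set Implicit Arguments.
Unset Strict Implicit.
Unset Printing Implicit Defensive.

Import GRing.Theory.
Local Open Scope ring_scope.

Definition CC := {poly rat}.
Definition hbar : CC := 'X.

Definition wordC (R : ringType) (L : choiceType) (s : seq L)
  : {malg R[{fmonom L}]} := << FMonom s >>.

Definition la := false.
Definition lb := true.
Definition lx := false.
Definition ly := true.

Definition HH := {malg CC[{fmonom bool}]}.
(* C<A>: since A is algebraically independent, C<A> is the free C-algebra on A.
   Letter 0 stands for hbar*b, letter k >= 1 for g_k = b a^k. *)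
Definition HA := {malg CC[{fmonom nat}]}.
(* frak h^1 = free Q-algebra on z_1, z_2, ...; letter i stands for z_(i+1). *)
Definition h1 := {malg rat[{fmonom nat}]}.
Definition hh := {malg rat[{fmonom bool}]}.

Definition embA_letter (i : nat) : HH :=
  if i == 0%N then hbar *: wordC CC [:: lb]
  else wordC CC (lb :: nseq i la).
Definition embA (p : HA) : HH :=
  \sum_(k <- msupp p) p@_k *: \prod_(i <- fmonom_val k) embA_letter i.

Definition emb1_letter (i : nat) : hh := wordC rat (ly :: nseq i lx).
Definition emb1 (p : h1) : hh :=
  \sum_(k <- msupp p) p@_k *: \prod_(i <- fmonom_val k) emb1_letter i.

(* iota : C<A> -> h^1, the unital Q-algebra hom with iota(hbar) = 0,
   iota(hbar b) = 0, iota(g_k) = z_k. *)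
Definition iota_letter (i : nat) : h1 :=
  if i == 0%N then 0 else wordC rat [:: i.-1].
Definition iotaA (p : HA) : h1 :=
  \sum_(k <- msupp p) (p@_k).[0] *: \prod_(i <- fmonom_val k) iota_letter i.

Definition bilin (R : comRingType) (L : choiceType)
    (f : seq L -> seq L -> {malg R[{fmonom L}]})
    (p q : {malg R[{fmonom L}]}) : {malg R[{fmonom L}]} :=
  \sum_(k1 <- msupp p) \sum_(k2 <- msupp q)
     (p@_k1 * q@_k2) *: f (fmonom_val k1) (fmonom_val k2).

(* u o_hbar v for u, v in A (letters): hbar b o hbar b = hbar (hbar b),
   hbar b o g_k = hbar g_k, g_k o g_l = g_(k+l). *)
Definition circ_h (u v : nat) : HA :=
  if (u == 0%N) || (v == 0%N) then hbar *: wordC CC [:: (u + v)%N]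
  else wordC CC [:: (u + v)%N].

(* Words are given reversed (head = last letter), to follow the
   right-end recursion  (wu)*(w'v) = (w*w'v)u + (wu*w')v + (w*w')(u o v). *)
Fixpoint harm_h_rev (s : seq nat) : seq nat -> HA :=
  match s with
  | [::] => fun t => wordC CC (rev t)
  | u :: s' => fix F (t : seq nat) : HA :=
      match t with
      | [::] => wordC CC (rev (u :: s'))
      | v :: t' => harm_h_rev s' t * wordC CC [:: u]
                   + F t' * wordC CC [:: v]
                   + harm_h_rev s' t' * circ_h u v
      end
  end.
Definition harm_h (p q : HA) : HA :=
  bilin (fun w w' => harm_h_rev (rev w) (rev w')) p q.

(* z_(u+1) z_(v+1) -> z_(u+v+2), i.e. letter u+v+1. *)
Fixpoint harm_rev (s : seq nat) : seq nat -> h1 :=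
  match s with
  | [::] => fun t => wordC rat (rev t)
  | u :: s' => fix F (t : seq nat) : h1 :=
      match t with
      | [::] => wordC rat (rev (u :: s'))
      | v :: t' => harm_rev s' t * wordC rat [:: u]
                   + F t' * wordC rat [:: v]
                   + harm_rev s' t' * wordC rat [:: (u + v).+1]
      end
  end.
Definition harm (p q : h1) : h1 :=
  bilin (fun w w' => harm_rev (rev w) (rev w')) p q.

(* wa sh w'a = (wa sh w' + w sh w'a + hbar (w sh w')) a,
   wb sh w' = w sh w'b = (w sh w') b. *)
Fixpoint sh_h_rev (s : seq bool) : seq bool -> HH :=
  match s with
  | [::] => fun t => wordC CC (rev t)
  | u :: s' => fix F (t : seq bool) : HH :=
      match t with
      | [::] => wordC CC (rev (u :: s'))
      | v :: t' =>
          if u == lb then sh_h_rev s' t * wordC CC [:: lb]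
          else if v == lb then F t' * wordC CC [:: lb]
          else (F t' + sh_h_rev s' t + hbar *: sh_h_rev s' t')
                 * wordC CC [:: la]
      end
  end.
Definition sh_h (p q : HH) : HH :=
  bilin (fun w w' => sh_h_rev (rev w) (rev w')) p q.

Fixpoint sh_rev (s : seq bool) : seq bool -> hh :=
  match s with
  | [::] => fun t => wordC rat (rev t)
  | u :: s' => fix F (t : seq bool) : hh :=
      match t with
      | [::] => wordC rat (rev (u :: s'))
      | v :: t' => sh_rev s' t * wordC rat [:: u] + F t' * wordC rat [:: v]
      end
  end.
Definition sh (p q : hh) : hh :=
  bilin (fun w w' => sh_rev (rev w) (rev w')) p q.

From HB Require Import structures.
From mathcomp Require Import all_boot all_order all_algebra.
From mathcomp Require Import finmap zify.
From mathcomp.multinomials Require Import monalg.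

Set Implicit Arguments.
Unset Strict Implicit.
Unset Printing Implicit Defensive.
Import GRing.Theory.
Local Open Scope ring_scope.

(* iota is the composite of hbar |-> 0 with the letter substitution
   hbar b |-> 0, g_k |-> z_k, hence an algebra map.  Pushing the defining
   recursion of *_hbar through it gives the recursion of *: a letter hbar b
   dies on both sides, and u o_hbar v goes to z_(k+l), or to 0 when it carries
   a factor hbar.  For the shuffle, C<A> is spanned in frak H by products of
   the blocks hbar b and b a^k (k >= 1).  Unfolding the recursion of sh_hbar
   along the trailing a's of two blocks only ever leaves such blocks behind:
   the one term in which two b's meet, b b a^m, comes with the factor hbar and
   is (hbar b)(b a^m).  Finally, the map theta : frak H -> frak h which kills
   hbar and reads a block b a^(k+1) as y x^k extends iota, and on products of
   blocks it turns the recursion of sh_hbar into that of sh: the hbar-term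
   dies and the two remaining terms are the shuffle recursion for words ending
   in x or y. *)

Section MalgInduction.
Variables (K : choiceType) (G T : zmodType).

Lemma malg_ind (P : {malg G[K]} -> Prop) :
  P 0 -> (forall p q, P p -> P q -> P (p + q)) -> (forall c k, P << c *g k >>) ->
  forall p, P p.
Proof. by move=> P0 PD PU p; rewrite (monalgE p); apply: big_ind. Qed.

Lemma malg_additive_ext (f g : {malg G[K]} -> T) :
  {morph f : x y / x + y} -> {morph g : x y / x + y} ->
  (forall c k, f << c *g k >> = g << c *g k >>) -> f =1 g.
Proof.
move=> fD gD fgU; elim/malg_ind => [|p q fgp fgq|//]; last by rewrite fD gD fgp fgq.
have f0 : f 0 = 0 by apply: (@addrI _ (f 0)); rewrite -fD !addr0.
have g0 : g 0 = 0 by apply: (@addrI _ (g 0)); rewrite -gD !addr0.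
by rewrite f0 g0.
Qed.

Lemma malg_biadditive_ext (Phi Psi : {malg G[K]} -> {malg G[K]} -> T) :
  (forall q, {morph Phi^~ q : x y / x + y}) -> (forall p, {morph Phi p : x y / x + y}) ->
  (forall q, {morph Psi^~ q : x y / x + y}) -> (forall p, {morph Psi p : x y / x + y}) ->
  (forall c d k k', Phi << c *g k >> << d *g k' >> = Psi << c *g k >> << d *g k' >>) ->
  Phi =2 Psi.
Proof.
move=> PhiDl PhiDr PsiDl PsiDr PhiPsiU p q; move: p.
by apply: malg_additive_ext => // c k; move: q; apply: malg_additive_ext.
Qed.
End MalgInduction.

Section Words.
Variables (R : nzRingType) (L : choiceType) (T : zmodType).
Local Notation wordC := (wordC R).

Lemma wordC_nil : wordC ([::] : seq L) = 1.
Proof. by rewrite -mpolyC1E /wordC; congr << _ *g _ >>; apply: val_inj; rewrite /= fm1. Qed.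

Lemma wordC_cat (s t : seq L) : wordC (s ++ t) = wordC s * wordC t.
Proof.
rewrite /wordC malgM_def fgmulUU mulr1; congr << _ *g _ >>.
by apply: val_inj; rewrite /= fmM.
Qed.

Lemma wordC_cons (x : L) s : wordC (x :: s) = wordC [:: x] * wordC s.
Proof. by rewrite -wordC_cat. Qed.

Lemma wordC_rcons (s : seq L) x : wordC (rcons s x) = wordC s * wordC [:: x].
Proof. by rewrite -cats1 wordC_cat. Qed.

Lemma wordC_nseq (x : L) n : wordC (nseq n x) = wordC [:: x] ^+ n.
Proof. by elim: n => [|n IH]; rewrite ?wordC_nil // exprS -IH -wordC_cat. Qed.

Lemma monomial_wordC c (k : {fmonom L}) : << c *g k >> = c *: wordC (fmonom_val k).
Proof.
by apply/malgP => k'; rewrite mcoeffZ !mcoeffU fmK; case: eqP; rewrite ?mulr1 ?mulr0.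
Qed.

Lemma malg_additive_wordC_ext (f g : {malg R[{fmonom L}]} -> T) :
  {morph f : x y / x + y} -> {morph g : x y / x + y} ->
  (forall c s, f (c *: wordC s) = g (c *: wordC s)) -> f =1 g.
Proof. by move=> fD gD fg; apply: malg_additive_ext => // c k; rewrite monomial_wordC. Qed.
End Words.

Lemma malg_scalerAr (K : monomType) (R : comNzRingType) (c : R) (x y : {malg R[K]}) :
  c *: (x * y) = x * (c *: y).
Proof.
rewrite -[c *: y]mul_malgC -[c *: (x * y)]mul_malgC !mulrA; congr (_ * _).
move: x; apply: malg_additive_ext => [x1 x2|x1 x2|d k] /=; rewrite ?(mulrDl, mulrDr) //.
by rewrite !malgM_def !fgmulUU mulrC mulm1 mul1m.
Qed.

Section BilinearMaps.
Variables (R : nzRingType) (V : lmodType R).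
Implicit Types (Phi Psi : V -> V -> V).

Definition bilinear_map Phi := (forall q, linear (Phi^~ q)) /\ (forall p, linear (Phi p)).

Lemma id_linear : linear (fun p : V => p).
Proof. by []. Qed.

Lemma bilinear_comp Phi (f g : V -> V) :
  bilinear_map Phi -> linear f -> linear g -> bilinear_map (fun p q => Phi (f p) (g q)).
Proof.
move=> [Phil Phir] f_lin g_lin.
by split=> [q|p] c u v /=; rewrite ?f_lin ?g_lin ?Phil ?Phir.
Qed.

Lemma bilinear_add Phi Psi :
  bilinear_map Phi -> bilinear_map Psi -> bilinear_map (fun p q => Phi p q + Psi p q).
Proof.
move=> [Phil Phir] [Psil Psir].
by split=> [q|p] c u v /=; rewrite ?(Phil, Phir, Psil, Psir) scalerDr addrACA.
Qed.

Section Theory.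
Variables (Phi : V -> V -> V) (Phi_bilinear : bilinear_map Phi).

Lemma bilinearDl q : {morph Phi^~ q : x y / x + y}.
Proof. exact: (GRing.semilinear_linear (Phi_bilinear.1 q)).2. Qed.

Lemma bilinearDr p : {morph Phi p : x y / x + y}.
Proof. exact: (GRing.semilinear_linear (Phi_bilinear.2 p)).2. Qed.

Lemma bilinearZl c p q : Phi (c *: p) q = c *: Phi p q.
Proof. exact: (scalable_linear (Phi_bilinear.1 q)). Qed.

Lemma bilinearZr c p q : Phi p (c *: q) = c *: Phi p q.
Proof. exact: (scalable_linear (Phi_bilinear.2 p)). Qed.

Lemma bilinear0l q : Phi 0 q = 0.
Proof. by rewrite -(scale0r (0 : V)) bilinearZl !scale0r. Qed.

Lemma bilinear0r p : Phi p 0 = 0.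
Proof. by rewrite -(scale0r (0 : V)) bilinearZr !scale0r. Qed.
End Theory.
End BilinearMaps.

Lemma bilinear_scale (R : comNzRingType) (V : lmodType R) (a : R) (Phi : V -> V -> V) :
  bilinear_map Phi -> bilinear_map (fun p q => a *: Phi p q).
Proof.
move=> [Phil Phir].
by split=> [q|p] c u v /=; rewrite ?(Phil, Phir) scalerDr !scalerA mulrC.
Qed.

Section BilinearProducts.
Variables (R : nzRingType) (M : lalgType R).

Lemma mulr_linear (w : M) : linear (fun p : M => p * w).
Proof. by move=> c p q; rewrite mulrDl scalerAl. Qed.

Lemma bilinear_mulr (Phi : M -> M -> M) w :
  bilinear_map Phi -> bilinear_map (fun p q => Phi p q * w).
Proof. by move=> [Phil Phir]; split=> [q|p] c u v /=; rewrite ?Phil ?Phir mulr_linear. Qed.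
End BilinearProducts.

Section WordExtensionality.
Variables (R : nzRingType) (L : choiceType).
Local Notation M := {malg R[{fmonom L}]}.
Local Notation wordC := (wordC R).

Lemma linear_wordC_ext (W : lmodType R) (f g : M -> W) :
  linear f -> linear g -> (forall s, f (wordC s) = g (wordC s)) -> f =1 g.
Proof.
move=> f_lin g_lin fg; apply: malg_additive_wordC_ext.
- exact: (GRing.semilinear_linear f_lin).2.
- exact: (GRing.semilinear_linear g_lin).2.
by move=> c s; rewrite (scalable_linear f_lin) (scalable_linear g_lin) fg.
Qed.

Lemma bilinear_wordC_ext (Phi Psi : M -> M -> M) :
  bilinear_map Phi -> bilinear_map Psi ->
  (forall s t, Phi (wordC s) (wordC t) = Psi (wordC s) (wordC t)) -> Phi =2 Psi.
Proof.
move=> [Phil Phir] [Psil Psir] words p q; move: p.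
apply: linear_wordC_ext (Phil q) (Psil q) _ => s.
exact: (linear_wordC_ext (Phir _) (Psir _) (words s)).
Qed.

Section Transfer.
Variables (S : nzRingType) (U : lmodType R) (V : lmodType S).
Variables (e : M -> U) (hU : U -> U -> U) (io : U -> V) (f : R -> S) (hV : V -> V -> V).
Hypotheses (e_linear : linear e) (hU_bilinear : bilinear_map hU).

Let eD : {morph e : x y / x + y}. Proof. exact: (GRing.semilinear_linear e_linear).2. Qed.
Let eZ c x : e (c *: x) = c *: e x. Proof. exact: scalable_linear. Qed.

Lemma transfer_wordC_ext :
  bilinear_map hV -> {morph io : x y / x + y} -> (forall c x, io (c *: x) = f c *: io x) ->
  (forall s t, io (hU (e (wordC s)) (e (wordC t))) = hV (io (e (wordC s))) (io (e (wordC t)))) ->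
  forall p q, io (hU (e p) (e q)) = hV (io (e p)) (io (e q)).
Proof.
move=> hV_bilinear ioD ioZ words.
have words_l s q : io (hU (e (wordC s)) (e q)) = hV (io (e (wordC s))) (io (e q)).
  move: q; apply: malg_additive_wordC_ext => [q1 q2|q1 q2|d t].
  - by rewrite eD (bilinearDr hU_bilinear) ioD.
  - by rewrite eD ioD (bilinearDr hV_bilinear).
  by rewrite eZ (bilinearZr hU_bilinear) !ioZ (bilinearZr hV_bilinear) words.
move=> p q; move: p; apply: malg_additive_wordC_ext => [p1 p2|p1 p2|c s].
- by rewrite eD (bilinearDl hU_bilinear) ioD.
- by rewrite eD ioD (bilinearDl hV_bilinear).
by rewrite eZ (bilinearZl hU_bilinear) !ioZ (bilinearZl hV_bilinear) words_l.
Qed.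

Lemma closed_wordC_ext (A : U -> Prop) :
  (forall x y, A x -> A y -> A (x + y)) -> (forall c x, A x -> A (c *: x)) ->
  (forall s t, A (hU (e (wordC s)) (e (wordC t)))) -> forall p q, A (hU (e p) (e q)).
Proof.
move=> AD AZ words.
have e0 : e 0 = 0 by rewrite -(scale0r (0 : M)) eZ scale0r.
have A0 : A 0 by rewrite -(scale0r (hU (e (wordC [::])) (e (wordC [::])))); apply: AZ.
have words_l s q : A (hU (e (wordC s)) (e q)).
  elim/malg_ind: q => [|q1 q2|d k]; first by rewrite e0 (bilinear0r hU_bilinear).
    by rewrite eD (bilinearDr hU_bilinear); apply: AD.
  by rewrite monomial_wordC eZ (bilinearZr hU_bilinear); apply: AZ.
move=> p q; elim/malg_ind: p => [|p1 p2|c k]; first by rewrite e0 (bilinear0l hU_bilinear).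
  by rewrite eD (bilinearDl hU_bilinear); apply: AD.
by rewrite monomial_wordC eZ (bilinearZl hU_bilinear); apply: AZ.
Qed.
End Transfer.
End WordExtensionality.

Section MalgLift.
Variables (R S : nzRingType) (h : {rmorphism R -> S}) (V : lmodType S) (L : choiceType).
Variable F : seq L -> V.

Definition malg_lift (p : {malg R[{fmonom L}]}) : V :=
  \sum_(k <- msupp p) h p@_k *: F (fmonom_val k).

Lemma malg_liftEw (d : {fset {fmonom L}}) p : (msupp p `<=` d)%fset ->
  malg_lift p = \sum_(k <- d) h p@_k *: F (fmonom_val k).
Proof.
move=> le; rewrite /malg_lift (big_fset_incl _ le) // => k _ /mcoeff_outdom ->.
by rewrite rmorph0 scale0r.
Qed.

Lemma malg_liftD : {morph malg_lift : p q / p + q}.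
Proof.
move=> p q; rewrite !(@malg_liftEw (msupp p `|` msupp q)%fset) ?msuppD_le //.
- by rewrite -big_split; apply: eq_bigr => k _; rewrite mcoeffD rmorphD scalerDl.
- exact: fsubsetUr.
exact: fsubsetUl.
Qed.

Lemma malg_liftZ c p : malg_lift (c *: p) = h c *: malg_lift p.
Proof.
rewrite (@malg_liftEw (msupp p)) ?msuppZ_le // scaler_sumr.
by apply: eq_bigr => k _; rewrite mcoeffZ rmorphM scalerA.
Qed.

Lemma malg_lift_monomial c k : malg_lift << c *g k >> = h c *: F (fmonom_val k).
Proof. by rewrite (malg_liftEw msuppU_le) big_seq_fset1 mcoeffUU. Qed.

Lemma malg_lift_wordC s : malg_lift (wordC R s) = F s.
Proof. by rewrite malg_lift_monomial rmorph1 scale1r. Qed.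
End MalgLift.

Lemma eq_malg_lift (R S : nzRingType) (h : {rmorphism R -> S}) (V : lmodType S)
    (L : choiceType) (F G : seq L -> V) :
  F =1 G -> malg_lift h F =1 malg_lift h G.
Proof. by move=> FG p; apply: eq_bigr => k _; rewrite FG. Qed.

Lemma malg_lift_linear (R : nzRingType) (V : lmodType R) (L : choiceType) (F : seq L -> V) :
  linear (malg_lift idfun F).
Proof. by move=> c p q; rewrite malg_liftD malg_liftZ. Qed.

Section MalgLiftMul.
Variables (R S : nzRingType) (h : {rmorphism R -> S}) (V : lalgType S) (L : choiceType).
Implicit Types (F G : seq L -> V).

Lemma malg_lift_mulr_wordC F p w :
  malg_lift h F (p * wordC R w) = malg_lift h (fun s => F (s ++ w)) p.
Proof.
move: p; apply: malg_additive_wordC_ext => [p q|p q|c s]; rewrite ?mulrDl ?malg_liftD //.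
by rewrite -scalerAl -wordC_cat !malg_liftZ !malg_lift_wordC.
Qed.

Lemma malg_lift_mulr F p v : malg_lift h F p * v = malg_lift h (fun s => F s * v) p.
Proof. by rewrite mulr_suml; apply: eq_bigr => k _; rewrite scalerAl. Qed.

Lemma malg_lift_mulrW F G v p w :
  (forall s, F (s ++ w) = G s * v) -> malg_lift h F (p * wordC R w) = malg_lift h G p * v.
Proof. by move=> FG; rewrite malg_lift_mulr_wordC malg_lift_mulr; apply: eq_malg_lift. Qed.
End MalgLiftMul.

Lemma malg_lift_prodM (R : nzRingType) (S : comNzRingType) (h : {rmorphism R -> S})
    (L L' : choiceType) (letter : L -> {malg S[{fmonom L'}]}) :
  {morph malg_lift h (fun s => \prod_(i <- s) letter i) : p q / p * q}.
Proof.
apply: malg_biadditive_ext => [q p1 p2|p q1 q2|q p1 p2|p q1 q2|c d k k'] /=.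
- by rewrite mulrDl malg_liftD.
- by rewrite mulrDr malg_liftD.
- by rewrite malg_liftD mulrDl.
- by rewrite malg_liftD mulrDr.
rewrite malgM_def fgmulUU !malg_lift_monomial rmorphM fmM big_cat.
by rewrite -scalerAl -malg_scalerAr scalerA.
Qed.

Section Bilin.
Variables (R : comNzRingType) (L : choiceType) (f : seq L -> seq L -> {malg R[{fmonom L}]}).

Lemma bilin_lift p q : bilin f p q = malg_lift idfun (fun s => malg_lift idfun (f s) q) p.
Proof.
apply: eq_bigr => k _; rewrite /malg_lift scaler_sumr.
by apply: eq_bigr => k' _; rewrite scalerA.
Qed.

Lemma bilin_bilinear : bilinear_map (bilin f).
Proof.
split=> [q|p] c u v; rewrite !bilin_lift; first exact: malg_lift_linear.
have inner_lin s : linear (malg_lift idfun (f s)) by apply: malg_lift_linear.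
move: inner_lin; rewrite /malg_lift scaler_sumr -big_split => inner_lin.
by apply: eq_bigr => k _; rewrite inner_lin scalerDr !scalerA mulrC.
Qed.

Lemma bilin_wordC s t : bilin f (wordC R s) (wordC R t) = f s t.
Proof. by rewrite bilin_lift !malg_lift_wordC. Qed.

Lemma bilin1l : (forall t, f [::] t = wordC R t) -> left_id 1 (bilin f).
Proof.
move=> f_nil; apply: (linear_wordC_ext (bilin_bilinear.2 1) (@id_linear _ _)) => t.
by rewrite -(wordC_nil R) bilin_wordC f_nil.
Qed.

Lemma bilin1r : (forall s, f s [::] = wordC R s) -> right_id 1 (bilin f).
Proof.
move=> f_nil; apply: (linear_wordC_ext (bilin_bilinear.1 1) (@id_linear _ _)) => s.
by rewrite -(wordC_nil R) bilin_wordC f_nil.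
Qed.
End Bilin.

Section ShuffleAlgebra.
Variables (R : comNzRingType) (M : lalgType R).
Hypothesis scalerAr : forall (c : R) (x y : M), c *: (x * y) = x * (c *: y).
Variables (sh : M -> M -> M) (a b : M) (hb : R).
Hypotheses (sh_bilinear : bilinear_map sh) (sh1l : left_id 1 sh) (sh1r : right_id 1 sh).
Hypotheses (sh_mulbl : forall P Q, sh (P * b) Q = sh P Q * b)
  (sh_mulbr : forall P Q, sh P (Q * b) = sh P Q * b)
  (sh_mulaa : forall P Q, sh (P * a) (Q * a) = (sh (P * a) Q + sh P (Q * a) + hb *: sh P Q) * a).

Definition Aletter (i : nat) : M := if i is k.+1 then b * a ^+ k.+1 else hb *: b.
Definition Aword (s : seq nat) : M := \prod_(i <- s) Aletter i.

Lemma Aword_nil : Aword [::] = 1.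
Proof. exact: big_nil. Qed.

Lemma Aword_rcons s i : Aword (rcons s i) = Aword s * Aletter i.
Proof. by rewrite /Aword big_rcons. Qed.

Lemma sh_mulA0l P Q : sh (P * Aletter 0) Q = sh P Q * Aletter 0.
Proof. by rewrite /= -!scalerAr (bilinearZl sh_bilinear) sh_mulbl. Qed.

Lemma sh_mulA0r P Q : sh P (Q * Aletter 0) = sh P Q * Aletter 0.
Proof. by rewrite /= -!scalerAr (bilinearZr sh_bilinear) sh_mulbr. Qed.

Section Blocks.
Variables X Y : M.
Local Notation T k l := (sh (X * b * a ^+ k) (Y * b * a ^+ l)).

Lemma sh_blocks_rec k l : T k.+1 l.+1 = (T k.+1 l + T k l.+1 + hb *: T k l) * a.
Proof. by rewrite !exprSr !mulrA sh_mulaa. Qed.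

Lemma sh_blocks_rec_exp k l m :
  T k.+1 l.+1 * a ^+ m =
  T k.+1 l * a ^+ m.+1 + T k l.+1 * a ^+ m.+1 + hb *: (T k l * a ^+ m.+1).
Proof. by rewrite sh_blocks_rec -mulrA -exprS !mulrDl -scalerAl. Qed.

Lemma sh_blocks_l k m : T k.+1 0 * a ^+ m.+1 = sh (X * Aletter k.+1) Y * Aletter m.+1.
Proof. by rewrite expr0 mulr1 sh_mulbr /= !mulrA. Qed.

Lemma sh_blocks_r l m : T 0 l.+1 * a ^+ m.+1 = sh X (Y * Aletter l.+1) * Aletter m.+1.
Proof. by rewrite expr0 mulr1 sh_mulbl /= !mulrA. Qed.

Lemma sh_blocks_hb m : hb *: (T 0 0 * a ^+ m.+1) = sh X Y * Aletter 0 * Aletter m.+1.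
Proof. by rewrite !expr0 !mulr1 sh_mulbl sh_mulbr /= -scalerAr -scalerAl !mulrA. Qed.

Section Closure.
Variable A : M -> Prop.
Hypotheses (AD : forall x y, A x -> A y -> A (x + y)) (AZ : forall c x, A x -> A (c *: x))
  (A_mulAletter : forall i x, A x -> A (x * Aletter i)).
Hypotheses (AXY : A (sh X Y)) (AXl : forall k, A (sh (X * Aletter k) Y))
  (AYl : forall l, A (sh X (Y * Aletter l))).

(* By induction on k + l, T k l * a ^+ m.+1 lies in A once k + l > 0: the trailing
   a's complete a letter b a^(m+1), and T 0 0, where two b's meet, only occurs
   with the factor hb. *)
Lemma closed_sh_blocks k l : A (sh (X * Aletter k.+1) (Y * Aletter l.+1)).
Proof.
have step k' l' m :
    (forall i j n, (i + j <= (k' + l').+1)%N -> (0 < i + j)%N -> A (T i j * a ^+ n.+1)) ->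
    A (T k'.+1 l'.+1 * a ^+ m).
  move=> IH; rewrite sh_blocks_rec_exp; apply: AD; first by apply: AD; apply: IH; lia.
  case: k' l' IH => [|k'] [|l'] IH;
    [by rewrite sh_blocks_hb; do 2 apply: A_mulAletter | by apply: AZ; apply: IH; lia ..].
have closed_exp n i j m : (i + j <= n)%N -> (0 < i + j)%N -> A (T i j * a ^+ m.+1).
  elim: n i j m => [|n IHn] [|i] [|j] m //; rewrite ?sh_blocks_l ?sh_blocks_r.
  - by move=> *; apply: A_mulAletter.
  - by move=> *; apply: A_mulAletter.
  by move=> *; apply: step => *; apply: IHn; lia.
by have := step k l 0 (closed_exp _); rewrite expr0 mulr1 /= !mulrA.
Qed.
End Closure.
End Blocks.

Section Closure.
Variable A : M -> Prop.
Hypotheses (A1 : A 1) (AD : forall x y, A x -> A y -> A (x + y))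
  (AZ : forall c x, A x -> A (c *: x)) (A_mulAletter : forall i x, A x -> A (x * Aletter i)).

Lemma closed_Aword s : A (Aword s).
Proof.
by elim/last_ind: s => [|s i IHs]; rewrite ?Aword_nil ?Aword_rcons; last apply: A_mulAletter.
Qed.

Lemma closed_sh_Aword s t : A (sh (Aword s) (Aword t)).
Proof.
elim/last_ind: s t => [|s i IHs] t; first by rewrite Aword_nil sh1l; apply: closed_Aword.
elim/last_ind: t i => [|t j IHt] i; first by rewrite Aword_nil sh1r; apply: closed_Aword.
rewrite !Aword_rcons; case: i IHt => [|k] IHt.
  by rewrite sh_mulA0l; apply: A_mulAletter; rewrite -Aword_rcons; apply: IHs.
case: j => [|l].
  by rewrite sh_mulA0r; apply: A_mulAletter; rewrite -Aword_rcons; apply: IHt.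
apply: closed_sh_blocks => // [k'|l']; rewrite -Aword_rcons; [exact: IHt | exact: IHs].
Qed.
End Closure.

Section Transport.
Variables (S : nzRingType) (N : lalgType S) (theta : M -> N) (sh' : N -> N -> N).
Variable xy : bool -> N.
Hypotheses (thetaD : {morph theta : x y / x + y}) (theta_hb : forall x, theta (hb *: x) = 0)
  (theta1 : theta 1 = 1)
  (theta_mulaa : forall P, theta (P * a * a) = theta (P * a) * xy false)
  (theta_mulba : forall P, theta (P * b * a) = theta P * xy true).
Hypotheses (sh'_bilinear : bilinear_map sh') (sh'1l : left_id 1 sh') (sh'1r : right_id 1 sh')
  (sh'_mul : forall l1 l2 P Q,
     sh' (P * xy l1) (Q * xy l2) = sh' P (Q * xy l2) * xy l1 + sh' (P * xy l1) Q * xy l2).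

Definition z_letter (i : nat) : N := if i is k.+1 then xy true * xy false ^+ k else 0.

Lemma theta_mulA0 P : theta (P * Aletter 0) = 0.
Proof. by rewrite /= -scalerAr theta_hb. Qed.

Definition block_prefix (Z : M) k := if k is k'.+1 then Z * b * a ^+ k'.+1 else Z.

Lemma theta_mul_block Z k :
  theta (Z * b * a ^+ k.+1) = theta (block_prefix Z k) * xy (k == 0%N).
Proof. by case: k => [|k]; rewrite ?expr1 ?theta_mulba //= !exprSr !mulrA theta_mulaa. Qed.

Lemma theta_mulAletter Z i : theta (Z * Aletter i) = theta Z * z_letter i.
Proof.
case: i => [|k]; first by rewrite theta_mulA0 mulr0.
rewrite /= mulrA; elim: k => [|k IHk]; first by rewrite theta_mul_block mulr1.
by rewrite theta_mul_block /= IHk exprSr !mulrA.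
Qed.

Lemma theta_Aword s : theta (Aword s) = \prod_(i <- s) z_letter i.
Proof.
elim/last_ind: s => [|s i IHs]; first by rewrite Aword_nil theta1 big_nil.
by rewrite Aword_rcons theta_mulAletter IHs big_rcons.
Qed.

Section Blocks.
Variables X Y : M.
Local Notation T k l := (sh (X * b * a ^+ k) (Y * b * a ^+ l)).
Hypotheses (HXl : forall k, theta (sh (X * Aletter k) Y) = sh' (theta (X * Aletter k)) (theta Y))
  (HYl : forall l, theta (sh X (Y * Aletter l)) = sh' (theta X) (theta (Y * Aletter l))).

Lemma theta_sh_blocks k l :
  theta (T k.+1 l.+1) = sh' (theta (X * b * a ^+ k.+1)) (theta (Y * b * a ^+ l.+1)).
Proof.
have step k' l' :
    theta (T k'.+1 l' * a) =
      sh' (theta (X * b * a ^+ k'.+1)) (theta (block_prefix Y l')) * xy (l' == 0%N) ->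
    theta (T k' l'.+1 * a) =
      sh' (theta (block_prefix X k')) (theta (Y * b * a ^+ l'.+1)) * xy (k' == 0%N) ->
    theta (T k'.+1 l'.+1) = sh' (theta (X * b * a ^+ k'.+1)) (theta (Y * b * a ^+ l'.+1)).
  move=> eq_l eq_r; rewrite sh_blocks_rec !mulrDl !thetaD -scalerAl theta_hb addr0 eq_l eq_r.
  by rewrite !theta_mul_block sh'_mul addrC.
have bound n : forall k l, (k + l <= n)%N ->
    theta (T k.+1 l.+1) = sh' (theta (X * b * a ^+ k.+1)) (theta (Y * b * a ^+ l.+1)).
  elim: n => [|n IHn] k' l' le_kl_n; apply: step.
  - move: le_kl_n; rewrite leqn0 addn_eq0 => /andP[/eqP-> /eqP->].
    by rewrite expr0 mulr1 sh_mulbr theta_mulba -mulrA (HXl 1).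
  - move: le_kl_n; rewrite leqn0 addn_eq0 => /andP[/eqP-> /eqP->].
    by rewrite expr0 mulr1 sh_mulbl theta_mulba -mulrA (HYl 1).
  - case: l' le_kl_n => [|l'] le_kl_n.
      by rewrite expr0 mulr1 sh_mulbr theta_mulba -mulrA (HXl k'.+1).
    by rewrite sh_blocks_rec theta_mulaa -sh_blocks_rec IHn //; lia.
  case: k' le_kl_n => [|k'] le_kl_n.
    by rewrite expr0 mulr1 sh_mulbl theta_mulba -mulrA (HYl l'.+1).
  by rewrite sh_blocks_rec theta_mulaa -sh_blocks_rec IHn //; lia.
exact: bound (leqnn _).
Qed.
End Blocks.

Lemma theta_sh_Aword s t :
  theta (sh (Aword s) (Aword t)) = sh' (theta (Aword s)) (theta (Aword t)).
Proof.
elim/last_ind: s t => [|s i IHs] t; first by rewrite Aword_nil sh1l theta1 sh'1l.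
elim/last_ind: t i => [|t j IHt] i; first by rewrite Aword_nil sh1r theta1 sh'1r.
rewrite !Aword_rcons; case: i IHt => [|k] IHt.
  by rewrite sh_mulA0l !theta_mulA0 (bilinear0l sh'_bilinear).
case: j => [|l]; first by rewrite sh_mulA0r !theta_mulA0 (bilinear0r sh'_bilinear).
rewrite /= !mulrA theta_sh_blocks // => [k'|l']; rewrite -Aword_rcons.
  by rewrite IHt Aword_rcons.
by rewrite IHs Aword_rcons.
Qed.
End Transport.
End ShuffleAlgebra.

Local Notation wa := (wordC CC [:: la]).
Local Notation wb := (wordC CC [:: lb]).
Local Notation wx := (wordC rat [:: lx]).
Local Notation wy := (wordC rat [:: ly]).

Ltac bilinearity :=
  repeat first
    [ exact: bilin_bilinear
    | apply: bilinear_add | apply: bilinear_scale | apply: bilinear_mulr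
    | apply: bilinear_comp;
        [exact: bilin_bilinear | first [exact: mulr_linear | exact: id_linear] ..] ].

Lemma sh_h_bilinear : bilinear_map sh_h. Proof. exact: bilin_bilinear. Qed.
Lemma sh_bilinear : bilinear_map sh. Proof. exact: bilin_bilinear. Qed.
Lemma harm_h_bilinear : bilinear_map harm_h. Proof. exact: bilin_bilinear. Qed.
Lemma harm_bilinear : bilinear_map harm. Proof. exact: bilin_bilinear. Qed.

Lemma sh_h_wordC s t : sh_h (wordC CC s) (wordC CC t) = sh_h_rev (rev s) (rev t).
Proof. exact: bilin_wordC. Qed.

Lemma sh_h_rev_nil s : sh_h_rev s [::] = wordC CC (rev s).
Proof. by case: s. Qed.

Lemma sh_h1l : left_id 1 sh_h.
Proof. by apply: bilin1l => t; rewrite /= revK. Qed.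

Lemma sh_h1r : right_id 1 sh_h.
Proof. by apply: bilin1r => s; rewrite sh_h_rev_nil revK. Qed.

Lemma sh_h_rev_bl s t : sh_h_rev (lb :: s) t = sh_h_rev s t * wb.
Proof. by case: t => [|v t] //=; rewrite sh_h_rev_nil rev_cons wordC_rcons. Qed.

Lemma sh_h_rev_br s t : sh_h_rev s (lb :: t) = sh_h_rev s t * wb.
Proof.
elim: s => [|u s IHs]; first by rewrite /= rev_cons wordC_rcons.
case: u IHs => [IHs|_]; last by [].
by rewrite -/lb !sh_h_rev_bl {}IHs.
Qed.

Lemma sh_h_mulbl P Q : sh_h (P * wb) Q = sh_h P Q * wb.
Proof.
move: P Q; apply: bilinear_wordC_ext; try bilinearity.
by move=> s t; rewrite -wordC_rcons !sh_h_wordC rev_rcons sh_h_rev_bl.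
Qed.

Lemma sh_h_mulbr P Q : sh_h P (Q * wb) = sh_h P Q * wb.
Proof.
move: P Q; apply: bilinear_wordC_ext; try bilinearity.
by move=> s t; rewrite -wordC_rcons !sh_h_wordC rev_rcons sh_h_rev_br.
Qed.

Lemma sh_h_mulaa P Q :
  sh_h (P * wa) (Q * wa) = (sh_h (P * wa) Q + sh_h P (Q * wa) + hbar *: sh_h P Q) * wa.
Proof.
move: P Q; apply: bilinear_wordC_ext; try bilinearity.
by move=> s t; rewrite -!wordC_rcons !sh_h_wordC !rev_rcons.
Qed.

Lemma sh_wordC s t : sh (wordC rat s) (wordC rat t) = sh_rev (rev s) (rev t).
Proof. exact: bilin_wordC. Qed.

Lemma sh_rev_nil s : sh_rev s [::] = wordC rat (rev s).
Proof. by case: s. Qed.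

Lemma sh1l : left_id 1 sh.
Proof. by apply: bilin1l => t; rewrite /= revK. Qed.

Lemma sh1r : right_id 1 sh.
Proof. by apply: bilin1r => s; rewrite sh_rev_nil revK. Qed.

Lemma sh_mul x y P Q :
  sh (P * wordC rat [:: x]) (Q * wordC rat [:: y]) =
  sh P (Q * wordC rat [:: y]) * wordC rat [:: x] + sh (P * wordC rat [:: x]) Q * wordC rat [:: y].
Proof.
move: P Q; apply: bilinear_wordC_ext; try bilinearity.
by move=> s t; rewrite -!wordC_rcons !sh_wordC !rev_rcons.
Qed.

Lemma harm_wordC s t : harm (wordC rat s) (wordC rat t) = harm_rev (rev s) (rev t).
Proof. exact: bilin_wordC. Qed.

Lemma harm_rev_nil s : harm_rev s [::] = wordC rat (rev s).
Proof. by case: s. Qed.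

Lemma harm1l : left_id 1 harm.
Proof. by apply: bilin1l => t; rewrite /= revK. Qed.

Lemma harm1r : right_id 1 harm.
Proof. by apply: bilin1r => s; rewrite harm_rev_nil revK. Qed.

Lemma harm_mul u v P Q :
  harm (P * wordC rat [:: u]) (Q * wordC rat [:: v]) =
  harm P (Q * wordC rat [:: v]) * wordC rat [:: u] + harm (P * wordC rat [:: u]) Q * wordC rat [:: v]
  + harm P Q * wordC rat [:: (u + v).+1].
Proof.
move: P Q; apply: bilinear_wordC_ext; try bilinearity.
by move=> s t; rewrite -!wordC_rcons !harm_wordC !rev_rcons.
Qed.

Lemma harm_h_wordC s t : harm_h (wordC CC s) (wordC CC t) = harm_h_rev (rev s) (rev t).
Proof. exact: bilin_wordC. Qed.

Lemma harm_h_rev_nil s : harm_h_rev s [::] = wordC CC (rev s).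
Proof. by case: s. Qed.

Lemma harm_h1l t : harm_h 1 (wordC CC t) = wordC CC t.
Proof. by rewrite -(wordC_nil CC) harm_h_wordC /= revK. Qed.

Lemma harm_h1r s : harm_h (wordC CC s) 1 = wordC CC s.
Proof. by rewrite -(wordC_nil CC) harm_h_wordC harm_h_rev_nil revK. Qed.

Lemma harm_h_rcons s t u v :
  harm_h (wordC CC (rcons s u)) (wordC CC (rcons t v)) =
  harm_h (wordC CC s) (wordC CC (rcons t v)) * wordC CC [:: u]
  + harm_h (wordC CC (rcons s u)) (wordC CC t) * wordC CC [:: v]
  + harm_h (wordC CC s) (wordC CC t) * circ_h u v.
Proof. by rewrite !harm_h_wordC !rev_rcons. Qed.

Lemma iotaA_lift : iotaA =1 malg_lift (horner_eval 0) (fun s => \prod_(i <- s) iota_letter i).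
Proof. by []. Qed.

Lemma iotaAD : {morph iotaA : p q / p + q}.
Proof. by move=> p q; rewrite !iotaA_lift malg_liftD. Qed.

Lemma iotaAZ c p : iotaA (c *: p) = c.[0] *: iotaA p.
Proof. by rewrite !iotaA_lift malg_liftZ. Qed.

Lemma iotaAM : {morph iotaA : p q / p * q}.
Proof. by move=> p q; rewrite !iotaA_lift malg_lift_prodM. Qed.

Lemma iotaA_wordC s : iotaA (wordC CC s) = \prod_(i <- s) iota_letter i.
Proof. by rewrite iotaA_lift malg_lift_wordC. Qed.

Lemma iotaA1 : iotaA 1 = 1.
Proof. by rewrite -(wordC_nil CC) iotaA_wordC big_nil. Qed.

Lemma iotaA_letter u : iotaA (wordC CC [:: u]) = iota_letter u.
Proof. by rewrite iotaA_wordC big_seq1. Qed.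

Lemma iotaA_wordC_rcons s u :
  iotaA (wordC CC (rcons s u)) = iotaA (wordC CC s) * iotaA (wordC CC [:: u]).
Proof. by rewrite wordC_rcons iotaAM. Qed.

Lemma iota_letter0 : iota_letter 0 = 0.
Proof. by []. Qed.

Lemma iota_letterS k : iota_letter k.+1 = wordC rat [:: k].
Proof. by []. Qed.

Lemma iotaA_circ_h0l v : iotaA (circ_h 0 v) = 0.
Proof. by rewrite /circ_h /= iotaAZ hornerX scale0r. Qed.

Lemma iotaA_circ_h0r u : iotaA (circ_h u 0) = 0.
Proof. by rewrite /circ_h orbT iotaAZ hornerX scale0r. Qed.

Lemma iotaA_circ_hS u v : iotaA (circ_h u.+1 v.+1) = wordC rat [:: (u + v).+1].
Proof. by rewrite /circ_h /= iotaA_letter addSn iota_letterS addnS. Qed.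

Lemma harm_mul_iotaA_letter u v X Y :
  harm (X * iotaA (wordC CC [:: u])) (Y * iotaA (wordC CC [:: v])) =
  harm X (Y * iotaA (wordC CC [:: v])) * iotaA (wordC CC [:: u])
  + harm (X * iotaA (wordC CC [:: u])) Y * iotaA (wordC CC [:: v])
  + harm X Y * iotaA (circ_h u v).
Proof.
rewrite !iotaA_letter.
case: u => [|u]; last case: v => [|v]; last by rewrite !iota_letterS iotaA_circ_hS harm_mul.
(* Generalizing [harm] keeps the failed matches of [rewrite] from unfolding it. *)
- rewrite iota_letter0 iotaA_circ_h0l.
  move: (bilinear0l harm_bilinear) (iota_letter v); move: harm => H H0 l.
  by rewrite !mulr0 !H0 mul0r !addr0.
rewrite iota_letter0 iotaA_circ_h0r.
move: (bilinear0r harm_bilinear) (iota_letter u.+1); move: harm => H H0 l.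
by rewrite !mulr0 !H0 mul0r !addr0.
Qed.

Lemma morph_harmonic_step (U V : pzRingType) (io : U -> V) (hU : U -> U -> U)
    (hV : V -> V -> V) (X Y Xa Yb a b c : U) :
  {morph io : x y / x + y} -> {morph io : x y / x * y} ->
  io Xa = io X * io a -> io Yb = io Y * io b ->
  hU Xa Yb = hU X Yb * a + hU Xa Y * b + hU X Y * c ->
  hV (io X * io a) (io Y * io b) =
    hV (io X) (io Y * io b) * io a + hV (io X * io a) (io Y) * io b + hV (io X) (io Y) * io c ->
  io (hU X Yb) = hV (io X) (io Yb) -> io (hU Xa Y) = hV (io Xa) (io Y) ->
  io (hU X Y) = hV (io X) (io Y) -> io (hU Xa Yb) = hV (io Xa) (io Yb).
Proof.
move=> ioD ioM ioXa ioYb hU_rec hV_rec e1 e2 e3.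
by rewrite hU_rec !ioD !ioM e1 e2 e3 ioXa ioYb hV_rec.
Qed.

Lemma iotaA_harm_h_wordC s t :
  iotaA (harm_h (wordC CC s) (wordC CC t)) = harm (iotaA (wordC CC s)) (iotaA (wordC CC t)).
Proof.
elim/last_ind: s t => [|s u IHs] t; first by rewrite wordC_nil harm_h1l iotaA1 harm1l.
elim/last_ind: t => [|t v IHt]; first by rewrite wordC_nil harm_h1r iotaA1 harm1r.
exact: (morph_harmonic_step iotaAD iotaAM (iotaA_wordC_rcons s u) (iotaA_wordC_rcons t v)
  (harm_h_rcons s t u v) (harm_mul_iotaA_letter u v _ _) (IHs _) IHt (IHs _)).
Qed.

Lemma iotaA_harm_h w w' : iotaA (harm_h w w') = harm (iotaA w) (iotaA w').
Proof.
exact: (@transfer_wordC_ext _ _ _ _ _ (fun p => p) harm_h iotaA (fun c => c.[0]) harm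
  (@id_linear _ _) harm_h_bilinear harm_bilinear iotaAD iotaAZ iotaA_harm_h_wordC).
Qed.

Lemma embA_lift : embA =1 malg_lift idfun (fun s => \prod_(i <- s) embA_letter i).
Proof. by []. Qed.

Lemma embA_linear : linear embA.
Proof. by move=> c p q; rewrite !embA_lift malg_lift_linear. Qed.

Lemma embAD : {morph embA : p q / p + q}.
Proof. exact: (GRing.semilinear_linear embA_linear).2. Qed.

Lemma embAZ c p : embA (c *: p) = c *: embA p.
Proof. exact: (scalable_linear embA_linear). Qed.

Lemma embAM : {morph embA : p q / p * q}.
Proof. by move=> p q; rewrite !embA_lift malg_lift_prodM. Qed.

Lemma embA_wordC s : embA (wordC CC s) = Aword wa wb hbar s.
Proof.
rewrite embA_lift malg_lift_wordC; apply: eq_bigr => -[|k] _ //.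
have -> : embA_letter k.+1 = wordC CC (lb :: nseq k.+1 la) by [].
by rewrite wordC_cons wordC_nseq.
Qed.

Lemma embA_image_sh_h w w' : exists W, embA W = sh_h (embA w) (embA w').
Proof.
pose A X := exists W, embA W = X.
have AD X Y : A X -> A Y -> A (X + Y) by move=> [W1 <-] [W2 <-]; exists (W1 + W2); rewrite embAD.
have AZ c X : A X -> A (c *: X) by move=> [W <-]; exists (c *: W); rewrite embAZ.
apply: (closed_wordC_ext embA_linear sh_h_bilinear AD AZ) => s t; rewrite !embA_wordC.
apply: (closed_sh_Aword (@malg_scalerAr _ _) sh_h_bilinear sh_h1l sh_h1r sh_h_mulbl sh_h_mulbr
  sh_h_mulaa (A := A)) => // [|i _ [W <-]].
  by exists 1; rewrite -(wordC_nil CC) embA_wordC Aword_nil.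
by exists (W * wordC CC [:: i]); rewrite embAM embA_wordC /Aword big_seq1.
Qed.

(* theta kills hbar and, reading words right to left (as [rev] does in the
   definitions), sends a product of blocks b a^(k+1) to the product of the y x^k;
   every other word goes to 0. *)
Fixpoint theta_rev (s : seq bool) : hh :=
  match s with
  | [::] => 1
  | false :: s' =>
      match s' with
      | false :: _ => theta_rev s' * wx
      | true :: s'' => theta_rev s'' * wy
      | [::] => 0
      end
  | true :: _ => 0
  end.

Definition theta : HH -> hh := malg_lift (horner_eval 0) (fun s => theta_rev (rev s)).

Lemma thetaD : {morph theta : p q / p + q}.
Proof. exact: malg_liftD. Qed.

Lemma thetaZ c p : theta (c *: p) = c.[0] *: theta p.
Proof. exact: malg_liftZ. Qed.

Lemma theta_hbar p : theta (hbar *: p) = 0.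
Proof. by rewrite thetaZ hornerX scale0r. Qed.

Lemma theta1 : theta 1 = 1.
Proof. by rewrite -(wordC_nil CC) /theta malg_lift_wordC. Qed.

Lemma theta_mulaa P : theta (P * wa * wa) = theta (P * wa) * wx.
Proof.
rewrite -mulrA -wordC_cat /theta [in RHS]malg_lift_mulr_wordC.
by apply: malg_lift_mulrW => s; rewrite !rev_cat.
Qed.

Lemma theta_mulba P : theta (P * wb * wa) = theta P * wy.
Proof.
rewrite -mulrA -wordC_cat /theta.
by apply: malg_lift_mulrW => s; rewrite !rev_cat.
Qed.

Lemma emb1_lift : emb1 =1 malg_lift idfun (fun s => \prod_(i <- s) emb1_letter i).
Proof. by []. Qed.

Lemma emb1D : {morph emb1 : p q / p + q}.
Proof. by move=> p q; rewrite !emb1_lift malg_liftD. Qed.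

Lemma emb1Z c p : emb1 (c *: p) = c *: emb1 p.
Proof. by rewrite !emb1_lift malg_liftZ. Qed.

Lemma emb1M : {morph emb1 : p q / p * q}.
Proof. by move=> p q; rewrite !emb1_lift malg_lift_prodM. Qed.

Lemma emb1_wordC s : emb1 (wordC rat s) = \prod_(i <- s) emb1_letter i.
Proof. by rewrite emb1_lift malg_lift_wordC. Qed.

Lemma emb1_1 : emb1 1 = 1.
Proof. by rewrite -(wordC_nil rat) emb1_wordC big_nil. Qed.

Lemma emb1_iota_letter i : emb1 (iota_letter i) = z_letter (fun l => wordC rat [:: l]) i.
Proof.
case: i => [|k]; first by rewrite /emb1 msupp0 big_nil.
by rewrite iota_letterS emb1_wordC big_seq1 /emb1_letter wordC_cons wordC_nseq.
Qed.

Lemma theta_embA W : theta (embA W) = emb1 (iotaA W).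
Proof.
have words s : theta (embA (wordC CC s)) = emb1 (iotaA (wordC CC s)).
  rewrite embA_wordC (theta_Aword (xy := fun l => wordC rat [:: l]) (@malg_scalerAr _ _)
    theta_hbar theta1 theta_mulaa theta_mulba).
  rewrite iotaA_wordC (big_morph emb1 emb1M emb1_1).
  by apply: eq_bigr => i _; rewrite emb1_iota_letter.
move: W; apply: malg_additive_wordC_ext => [p q|p q|c s].
- by rewrite embAD thetaD.
- by rewrite iotaAD emb1D.
by rewrite embAZ thetaZ iotaAZ emb1Z words.
Qed.

Lemma theta_sh_h_embA w w' :
  theta (sh_h (embA w) (embA w')) = sh (theta (embA w)) (theta (embA w')).
Proof.
apply: (transfer_wordC_ext embA_linear sh_h_bilinear sh_bilinear thetaD thetaZ) => s t.
rewrite !embA_wordC.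
exact: (theta_sh_Aword (@malg_scalerAr _ _) sh_h_bilinear sh_h1l sh_h1r sh_h_mulbl sh_h_mulbr
  sh_h_mulaa thetaD theta_hbar theta1 theta_mulaa theta_mulba sh_bilinear sh1l sh1r sh_mul).
Qed.

Theorem proposition3p9 (w w' : HA) :
  iotaA (harm_h w w') = harm (iotaA w) (iotaA w') /\
  (exists W : HA, embA W = sh_h (embA w) (embA w')) /\
  (forall W : HA, embA W = sh_h (embA w) (embA w') ->
     emb1 (iotaA W) = sh (emb1 (iotaA w)) (emb1 (iotaA w'))).
Proof.
split; first exact: iotaA_harm_h.
split; first exact: embA_image_sh_h.
move=> W embW; apply: etrans (esym (theta_embA W)) _.
by rewrite embW theta_sh_h_embA; congr sh; apply: theta_embA.
Qed.
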